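(* Let $m\in\{1,2\}$, $\gamma\in[2,3]$ and $z\in(0,z_M]$. Then the solution of $\frac{dC}{dV}=\frac{F(V,C;\gamma,z)}{G(V,C;\gamma,z)}$ on $[V_1,-\sqrt{2/\gamma}\,C_8(z))$ with $C(V_1)=C_1$ satisfies $C(V)>-\sqrt{\gamma/2}\,V$ for all $V\in(V_1,-\sqrt{2/\gamma}\,C_8(z))$ (and $C_1\ge-\sqrt{\gamma/2}V_1$ with equality only at $\gamma=2$).
   Context: Fix $m\in\{1,2\}$. For $z>0$ put $\lambda=1+m\gamma z$, $a_1=1+\frac{m(\gamma-1)}{2}$, $a_2=\frac{m(\gamma-1)+mz\gamma(\gamma-3)}{2}$, $a_3=\frac{mz\gamma(\gamma-1)}{2}$, $G(V,C;\gamma,z)=C^2[(m+1)V+2mz]-V(1+V)(\lambda+V)$, $F(V,C;\gamma,z)=C\{C^2[1+\frac{mz}{1+V}]-a_1(1+V)^2+a_2(1+V)-a_3\}$. $V_1=-\frac2{\gamma+1}$, $C_1=\frac{\sqrt{2\gamma(\gamma-1)}}{\gamma+1}$. $z_M=(\sqrt\gamma+\sqrt2)^{-2}$, $w(z)=\sqrt{1-2(\gamma+2)z+(\gamma-2)^2z^2}$, $V_8=\frac{-1+(\gamma-2)z+w}{2}$, $C_8=1+V_8$. *)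

From Stdlib Require Import Reals.
From Coquelicot Require Import Coquelicot.
Open Scope R_scope.

Definition lam (m g z : R) : R := 1 + m * g * z.
Definition a1 (m g : R) : R := 1 + m * (g - 1) / 2.
Definition a2 (m g z : R) : R := (m * (g - 1) + m * z * g * (g - 3)) / 2.
Definition a3 (m g z : R) : R := m * z * g * (g - 1) / 2.

Definition Gf (m g z V C : R) : R :=
  C ^ 2 * ((m + 1) * V + 2 * m * z) - V * (1 + V) * (lam m g z + V).

Definition Ff (m g z V C : R) : R :=
  C * (C ^ 2 * (1 + m * z / (1 + V)) - a1 m g * (1 + V) ^ 2
       + a2 m g z * (1 + V) - a3 m g z).

Definition V1g (g : R) : R := - (2 / (g + 1)).
Definition C1g (g : R) : R := sqrt (2 * g * (g - 1)) / (g + 1).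

Definition zM (g : R) : R := / (sqrt g + sqrt 2) ^ 2.
Definition wz (g z : R) : R := sqrt (1 - 2 * (g + 2) * z + (g - 2) ^ 2 * z ^ 2).
Definition V8 (g z : R) : R := (-1 + (g - 2) * z + wz g z) / 2.
Definition C8g (g z : R) : R := 1 + V8 g z.

Definition Vend (g z : R) : R := - (sqrt (2 / g) * C8g g z).

Definition is_solution (m g z a b c0 : R) (C : R -> R) : Prop :=
  C a = c0 /\
  filterlim C (at_right a) (locally c0) /\
  (forall V, a < V < b ->
     Gf m g z V (C V) <> 0 /\
     derivable_pt_lim C V (Ff m g z V (C V) / Gf m g z V (C V))).

(* Put k = sqrt(gamma/2) and gap(V) = C(V) + kV, the height of the solution above the
   line C = -kV.  On that line G = V B(V) and F + kG = k m V^2 P(V) / (2(1+V)) for two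
   quadratics B and P, so at a zero of gap its slope (F + kG)/G has the sign of -P(V)/B(V).
   On [V1, Vend) we have B(V) > B(Vend) >= 0 (as V + Vend < 0), and P < 0 because P is
   convex with P(V1) < 0 and P(Vend) <= 0.  Hence gap' > 0 wherever gap vanishes, and gap,
   positive just after V1, can never reach 0.  For gamma > 2 the start is gap(V1) > 0; for
   gamma = 2 one has gap(V1) = 0, but gap' tends to the positive slope of the line at V1.
   The endpoint inequalities B(Vend) >= 0 >= P(Vend) are polynomial: Vend = -c/k where
   c = C8 solves c(1-c) = z(gamma - (gamma-2)c); eliminating z and writing
   c = (k+u)/(1+k), u in [0,1], leaves inequalities in k in [1, 5/4] and u. *)

From Stdlib Require Import Reals Lra Psatz.
From Coquelicot Require Import Coquelicot.
Open Scope R_scope.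

(** * The vector field on the line C = -kV *)

Definition Bline (m g z V : R) : R := (g*(m+1) - 2)/2*V^2 - 2*V - lam m g z.
Definition Pline (g z V : R) : R :=
  (2*g - 1)*V^2 + (3*g - 2 - g*z*(g - 2))*V + ((g - 1) + g*z*(3 - g)).

Lemma Gf_on_line m g z k V : k^2 = g/2 -> Gf m g z V (-(k*V)) = V * Bline m g z V.
Proof.
  intros Hk. unfold Gf, Bline, lam.
  replace ((-(k*V))^2) with (k^2*V^2) by ring. rewrite Hk. field.
Qed.

Lemma Ff_on_line m g z k V : k^2 = g/2 -> 1 + V <> 0 ->
  Ff m g z V (-(k*V)) + k * Gf m g z V (-(k*V)) = k*m*V^2*Pline g z V / (2*(1 + V)).
Proof.
  intros Hk HV. unfold Ff, Gf, Pline, lam, a1, a2, a3.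
  replace ((-(k*V))^2) with (k^2*V^2) by ring. rewrite Hk. field. exact HV.
Qed.

Lemma Bline_pos_before m g z V W : 2 <= g*(m + 1) -> V < W -> V + W < 0 ->
  0 <= Bline m g z W -> 0 < Bline m g z V.
Proof.
  intros Hcoef HVW Hsum HW.
  assert (Hdiff : Bline m g z V - Bline m g z W
                  = (W - V)*(2 - (g*(m + 1) - 2)/2*(V + W)))
    by (unfold Bline; ring).
  assert (0 <= (g*(m + 1) - 2)/2 * -(V + W)) by (apply Rmult_le_pos; nra).
  assert (0 < (W - V)*(2 - (g*(m + 1) - 2)/2*(V + W)))
    by (apply Rmult_lt_0_compat; lra).
  lra.
Qed.

Lemma Pline_neg_between g z a b V : 1/2 <= g -> a <= V < b ->
  Pline g z a < 0 -> Pline g z b <= 0 -> Pline g z V < 0.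
Proof.
  intros Hg HV Ha Hb.
  assert (Hconv : Pline g z V * (b - a)
                  = (b - V)*Pline g z a + (V - a)*Pline g z b
                    - (2*g - 1)*(V - a)*(b - V)*(b - a))
    by (unfold Pline; ring).
  assert (0 <= (2*g - 1)*(V - a)*(b - V)*(b - a))
    by (repeat apply Rmult_le_pos; lra).
  assert ((b - V)*Pline g z a < 0) by (apply Rmult_pos_neg; lra).
  assert (0 <= (V - a) * - Pline g z b) by (apply Rmult_le_pos; lra).
  nra.
Qed.

Lemma slope_on_line_pos m g z k V : k^2 = g/2 -> 0 < k -> 0 < m ->
  V < 0 -> 0 < 1 + V -> 0 < Bline m g z V -> Pline g z V < 0 ->
  0 < Ff m g z V (-(k*V)) / Gf m g z V (-(k*V)) + k.
Proof.
  intros Hk Hk0 Hm HV HV1 HB HP.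
  assert (HG : Gf m g z V (-(k*V)) < 0)
    by (rewrite Gf_on_line by exact Hk; nra).
  replace (Ff m g z V (-(k*V)) / Gf m g z V (-(k*V)) + k)
    with ((Ff m g z V (-(k*V)) + k * Gf m g z V (-(k*V))) / Gf m g z V (-(k*V)))
    by (field; lra).
  rewrite Ff_on_line by (auto; lra).
  assert (0 < k*m*V^2 * - Pline g z V)
    by (apply Rmult_lt_0_compat; [apply Rmult_lt_0_compat; [nra|apply pow2_gt_0; lra]|lra]).
  assert (Hnum : k*m*V^2*Pline g z V / (2*(1 + V)) < 0).
  { unfold Rdiv. assert (0 < / (2*(1 + V))) by (apply Rinv_0_lt_compat; lra). nra. }
  unfold Rdiv. assert (/ Gf m g z V (-(k*V)) < 0) by (apply Rinv_lt_0_compat; lra).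
  nra.
Qed.

(** * The right endpoint Vend *)

Lemma sextic_neg k : 1 <= k <= 5/4 ->
  4*k^6 + 4*k^5 - 14*k^4 - 24*k^3 - 8*k^2 + 4*k + 2 < 0.
Proof.
  intros Hk. set (t := k - 1). replace k with (1 + t) by (unfold t; ring).
  assert (0 <= t <= 1/4) by (unfold t; lra).
  assert (0 <= t^3 <= 1/64) by (split; [apply pow_le|]; nra).
  nra.
Qed.

Lemma septic_pos k : 1 <= k ->
  0 < 4*k^7 + 8*k^6 - 14*k^5 - 22*k^4 + 16*k^3 + 22*k^2 - 2*k - 4.
Proof.
  intros Hk. set (t := k - 1). replace k with (1 + t) by (unfold t; ring).
  assert (Ht : forall n, 0 <= t^n) by (intros n; apply pow_le; unfold t; lra).
  pose proof (Ht 2%nat). pose proof (Ht 3%nat). pose proof (Ht 4%nat).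
  pose proof (Ht 5%nat). pose proof (Ht 6%nat). pose proof (Ht 7%nat).
  nra.
Qed.

Lemma quartic_neg k : 1 <= k -> -4*k^4 - 12*k^3 - 8*k^2 + 2*k + 2 < 0.
Proof. intros. nra. Qed.

Definition B_end_poly (k u m : R) : R :=
  -2*k^5*u*m - 4*k^5*u + 4*k^5*m + 4*k^5 - 2*k^4*u^2*m - 2*k^4*u^2
  + 4*k^4*u*m - 2*k^4*u + 4*k^4*m + 8*k^4 + 6*k^3*u*m + 6*k^3*u + 4*k^3
  + 2*k^2*u^2*m + 4*k^2*u^2 + 2*k^2*u - 2*k*u - 2*u^2.

Definition P_end_poly (k u : R) : R :=
  4*k^7*u + 8*k^6*u - 8*k^6 - 4*k^5*u^2 - 6*k^5*u - 8*k^5 - 8*k^4*u^2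
  - 6*k^4*u + 4*k^4 + 4*k^3*u^2 + 8*k^3*u + 4*k^3 + 10*k^2*u^2 + 2*k^2*u
  - 2*k*u - 2*u^2.

Lemma P_end_poly_nonpos k u : 1 <= k <= 5/4 -> 0 <= u <= 1 -> P_end_poly k u <= 0.
Proof.
  intros Hk Hu.
  pose proof (sextic_neg k Hk). pose proof (septic_pos k (proj1 Hk)).
  pose proof (quartic_neg k (proj1 Hk)).
  (* Expanded around u = 1, where the value is (k - 1) times the sextic. *)
  replace (P_end_poly k u) with
    ((k-1)*(4*k^6 + 4*k^5 - 14*k^4 - 24*k^3 - 8*k^2 + 4*k + 2)
     + (u-1)*((4*k^7 + 8*k^6 - 14*k^5 - 22*k^4 + 16*k^3 + 22*k^2 - 2*k - 4)
              - (1-u)*((k-1)*(-4*k^4 - 12*k^3 - 8*k^2 + 2*k + 2))))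
    by (unfold P_end_poly; ring).
  assert (0 <= (k-1)*-(4*k^6 + 4*k^5 - 14*k^4 - 24*k^3 - 8*k^2 + 4*k + 2))
    by (apply Rmult_le_pos; lra).
  assert (0 <= (1-u)*((k-1)*-(-4*k^4 - 12*k^3 - 8*k^2 + 2*k + 2)))
    by (apply Rmult_le_pos; [|apply Rmult_le_pos]; lra).
  nra.
Qed.

Lemma B_end_poly_nonneg k u m : 1 <= k -> 0 <= u <= 1 -> 1 <= m -> 0 <= B_end_poly k u m.
Proof.
  intros Hk Hu Hm.
  assert (Hpow : forall n, 1 <= k^n) by (intros n; pose proof (pow_R1_Rle k n); lra).
  pose proof (Hpow 2%nat). pose proof (Hpow 3%nat). pose proof (Hpow 4%nat).
  pose proof (Hpow 5%nat).
  assert (Hcoef : 0 <= -2*k^5*u + 4*k^5 - 2*k^4*u^2 + 4*k^4*u + 4*k^4 + 6*k^3*u + 2*k^2*u^2).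
  { assert (0 <= k^5*(4 - 2*u)) by (apply Rmult_le_pos; lra).
    assert (0 <= k^4*(u*(4 - 2*u))) by (apply Rmult_le_pos; [|apply Rmult_le_pos]; lra).
    assert (0 <= k^3*u) by (apply Rmult_le_pos; lra).
    assert (0 <= k^2*u^2) by (apply Rmult_le_pos; nra).
    lra. }
  replace (B_end_poly k u m) with
    ((m - 1)*(-2*k^5*u + 4*k^5 - 2*k^4*u^2 + 4*k^4*u + 4*k^4 + 6*k^3*u + 2*k^2*u^2)
     + k^5*(8 - 6*u) + 4*k^4*u*(1 - u) + k^4*(12 - 2*u) + 10*k^3*u + 4*k^3
     + 2*(k^3 - k)*u + 4*k^2*u^2 + 2*(k^2 - 1)*u^2 + 2*k^2*u)
    by (unfold B_end_poly; ring).
  assert (0 <= (m - 1)*(-2*k^5*u + 4*k^5 - 2*k^4*u^2 + 4*k^4*u + 4*k^4 + 6*k^3*u + 2*k^2*u^2))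
    by (apply Rmult_le_pos; lra).
  assert (0 <= k^5*(8 - 6*u)) by (apply Rmult_le_pos; lra).
  assert (0 <= 4*k^4*u*(1 - u)) by (apply Rmult_le_pos; [apply Rmult_le_pos|]; lra).
  assert (0 <= k^4*(12 - 2*u)) by (apply Rmult_le_pos; lra).
  assert (0 <= 10*k^3*u) by (apply Rmult_le_pos; lra).
  assert (0 <= 2*(k^3 - k)*u) by (apply Rmult_le_pos; [simpl|]; nra).
  assert (0 <= 4*k^2*u^2) by (apply Rmult_le_pos; nra).
  assert (0 <= 2*(k^2 - 1)*u^2) by (apply Rmult_le_pos; nra).
  assert (0 <= 2*k^2*u) by (apply Rmult_le_pos; lra).
  lra.
Qed.

Lemma Bline_end_factor k c z m : 0 < k ->
  z*(2*k^2 - (2*k^2 - 2)*c) = c*(1 - c) ->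
  k^2 * Bline m (2*k^2) z (-(c/k)) * (2*k^2 - (2*k^2 - 2)*c) * (1 + k)^3
  = ((1 + k)*c - k) * B_end_poly k ((1 + k)*c - k) m.
Proof.
  intros Hk Hz.
  transitivity
    ((((2*k^2*(m + 1) - 2)/2*c^2 + 2*c*k - k^2)*(2*k^2 - (2*k^2 - 2)*c)
      - 2*m*k^4*(c*(1 - c)))*(1 + k)^3).
  - rewrite <- Hz. unfold Bline, lam. field. lra.
  - unfold B_end_poly. field.
Qed.

Lemma Pline_end_factor k c z : 0 < k ->
  z*(2*k^2 - (2*k^2 - 2)*c) = c*(1 - c) ->
  k^2 * Pline (2*k^2) z (-(c/k)) * (2*k^2 - (2*k^2 - 2)*c) * (1 + k)^3
  = ((1 + k)*c - k) * P_end_poly k ((1 + k)*c - k).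
Proof.
  intros Hk Hz. set (g := 2*k^2).
  transitivity
    (((2*g - 1)*c^2*(g - (g - 2)*c) - (3*g - 2)*c*k*(g - (g - 2)*c)
      + g*(g - 2)*c*k*(c*(1 - c)) + (g - 1)*k^2*(g - (g - 2)*c)
      + g*(3 - g)*k^2*(c*(1 - c)))*(1 + k)^3).
  - rewrite <- Hz. unfold Pline, g. field. lra.
  - unfold P_end_poly, g. field.
Qed.

Section Endpoint.

Variables g z : R.
Hypothesis Hg : 2 <= g <= 3.
Hypothesis Hz : 0 < z <= zM g.

Let k := sqrt (g/2).
Let c := C8g g z.

Lemma sqrt_half_sq : k^2 = g/2.
Proof. unfold k. apply pow2_sqrt. lra. Qed.

Lemma two_sqrt_half_sq : 2*k^2 = g.
Proof. rewrite sqrt_half_sq. field. Qed.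

Lemma sqrt_half_bounds : 1 <= k <= 5/4.
Proof.
  pose proof sqrt_half_sq. assert (0 <= k) by apply sqrt_pos. split; nra.
Qed.

Lemma sqrt_two_div_eq : sqrt (2/g) = /k.
Proof. unfold k. rewrite <- sqrt_inv. f_equal. field. lra. Qed.

Lemma zM_eq : zM g = / (2*(k + 1)^2).
Proof.
  unfold zM. f_equal.
  assert (Hsg : sqrt g = sqrt 2 * k)
    by (unfold k; rewrite <- sqrt_mult by lra; f_equal; field).
  rewrite Hsg. replace ((sqrt 2 * k + sqrt 2)^2) with (sqrt 2^2 * (k + 1)^2) by ring.
  rewrite pow2_sqrt by lra. ring.
Qed.

Lemma z_le_zM : 2*(k + 1)^2*z <= 1.
Proof.
  pose proof sqrt_half_bounds. destruct Hz as [Hz0 Hz1]. rewrite zM_eq in Hz1.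
  apply Rmult_le_reg_r with (/ (2*(k + 1)^2)).
  - apply Rinv_0_lt_compat. nra.
  - rewrite Rmult_comm, <- Rmult_assoc, Rinv_l by nra. lra.
Qed.

Let d := 1 - 2*(g + 2)*z + (g - 2)^2*z^2.

Lemma discriminant_factor : d = (1 - 2*(k + 1)^2*z)*(1 - 2*(k - 1)^2*z).
Proof. unfold d. rewrite <- two_sqrt_half_sq. ring. Qed.

Lemma wz_sq : wz g z ^ 2 = d.
Proof.
  unfold wz. apply pow2_sqrt. fold d. rewrite discriminant_factor.
  pose proof z_le_zM. pose proof sqrt_half_bounds.
  apply Rmult_le_pos; nra.
Qed.

Lemma C8g_eq : c = (1 + (g - 2)*z + wz g z)/2.
Proof. unfold c, C8g, V8. field. Qed.

Lemma C8g_root : z*(2*k^2 - (2*k^2 - 2)*c) = c*(1 - c).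
Proof.
  pose proof wz_sq as Hw2. unfold d in Hw2.
  rewrite two_sqrt_half_sq, C8g_eq. nra.
Qed.

Lemma C8g_range : 0 <= (1 + k)*c - k <= 1.
Proof.
  pose proof sqrt_half_bounds. pose proof z_le_zM.
  pose proof wz_sq as Hw2. rewrite discriminant_factor in Hw2.
  assert (Hw : 0 <= wz g z) by apply sqrt_pos.
  rewrite C8g_eq. set (w := wz g z) in *. rewrite <- two_sqrt_half_sq. split.
  - assert (Hlow : (k - 1)*(1 - 2*(k + 1)^2*z) <= (1 + k)*w).
    { assert (((k - 1)*(1 - 2*(k + 1)^2*z))^2 <= ((1 + k)*w)^2).
      { replace (((1 + k)*w)^2) with ((1 + k)^2*w ^ 2) by ring.
        rewrite Hw2. assert (0 <= (1 - 2*(k + 1)^2*z)*(4*k)) by (apply Rmult_le_pos; lra).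
        nra. }
      assert (0 <= (k - 1)*(1 - 2*(k + 1)^2*z)) by (apply Rmult_le_pos; lra).
      assert (0 <= (1 + k)*w) by (apply Rmult_le_pos; lra).
      nra. }
    nra.
  - assert (Hup : w <= 1 - (2*k^2 - 2)*z).
    { assert (0 <= 1 - (2*k^2 - 2)*z) by nra.
      assert (w ^ 2 <= (1 - (2*k^2 - 2)*z)^2) by (rewrite Hw2; nra).
      nra. }
    nra.
Qed.

Lemma endpoint_weight_pos : 0 < k^2 * (2*k^2 - (2*k^2 - 2)*c) * (1 + k)^3.
Proof.
  pose proof sqrt_half_bounds. pose proof C8g_range.
  assert (c <= 1) by nra.
  apply Rmult_lt_0_compat; [apply Rmult_lt_0_compat|apply pow_lt]; nra.
Qed.

Lemma Vend_eq : Vend g z = -(c/k).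
Proof.
  pose proof sqrt_half_bounds. unfold Vend. rewrite sqrt_two_div_eq. fold c. field. lra.
Qed.

Lemma Vend_neg : Vend g z < 0.
Proof.
  pose proof sqrt_half_bounds. pose proof C8g_range. rewrite Vend_eq.
  assert (0 < c/k) by (apply Rdiv_lt_0_compat; nra). lra.
Qed.

Lemma Bline_Vend_nonneg m : 1 <= m -> 0 <= Bline m g z (Vend g z).
Proof.
  intros Hm. pose proof sqrt_half_bounds. pose proof C8g_range. pose proof endpoint_weight_pos.
  pose proof (Bline_end_factor k c z m ltac:(lra) C8g_root) as Hfac.
  pose proof (B_end_poly_nonneg k ((1 + k)*c - k) m ltac:(lra) ltac:(lra) Hm).
  rewrite Vend_eq, <- two_sqrt_half_sq. nra.
Qed.

Lemma Pline_Vend_nonpos : Pline g z (Vend g z) <= 0.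
Proof.
  pose proof sqrt_half_bounds. pose proof C8g_range. pose proof endpoint_weight_pos.
  pose proof (Pline_end_factor k c z ltac:(lra) C8g_root) as Hfac.
  pose proof (P_end_poly_nonpos k ((1 + k)*c - k) ltac:(lra) ltac:(lra)).
  assert (0 <= ((1 + k)*c - k) * - P_end_poly k ((1 + k)*c - k))
    by (apply Rmult_le_pos; lra).
  rewrite Vend_eq, <- two_sqrt_half_sq. nra.
Qed.

Lemma Pline_V1_neg : Pline g z (V1g g) < 0.
Proof.
  pose proof sqrt_half_bounds. pose proof z_le_zM.
  assert (Hz8 : z <= 1/8) by nra.
  assert (Hfac : Pline g z (V1g g) * (g + 1)^2
                 = (g^2 - 4*g + 1)*((g - 1) - z*g*(g + 1)))
    by (unfold Pline, V1g; field; lra).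
  assert ((g^2 - 4*g + 1)*((g - 1) - z*g*(g + 1)) < 0).
  { apply Rmult_neg_pos; nra. }
  nra.
Qed.

End Endpoint.

Lemma V1g_gt_neg1 g : 1 < g -> -1 < V1g g.
Proof.
  intros Hg. assert (Hsum : 1 + V1g g = (g - 1)/(g + 1)) by (unfold V1g; field; lra).
  assert (0 < (g - 1)/(g + 1)) by (apply Rdiv_lt_0_compat; lra). lra.
Qed.

Lemma C1g_gap g : 1 <= g ->
  C1g g + sqrt (g/2) * V1g g = 2*sqrt (g/2)*(sqrt (g - 1) - 1)/(g + 1).
Proof.
  intros Hg. unfold C1g, V1g.
  replace (2*g*(g - 1)) with (2^2*(g/2)*(g - 1)) by field.
  rewrite !sqrt_mult, sqrt_pow2 by nra. field. lra.
Qed.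

Lemma C1g_above_line g : 2 <= g ->
  C1g g >= - (sqrt (g/2) * V1g g) /\ (C1g g = - (sqrt (g/2) * V1g g) <-> g = 2).
Proof.
  intros Hg. pose proof (C1g_gap g ltac:(lra)) as Hgap.
  assert (Hk : sqrt 1 <= sqrt (g/2)) by (apply sqrt_le_1_alt; lra).
  assert (Hs1 : sqrt 1 <= sqrt (g - 1)) by (apply sqrt_le_1_alt; lra).
  rewrite sqrt_1 in Hk, Hs1.
  assert (Hcoef : 0 < 2*sqrt (g/2)/(g + 1)) by (apply Rdiv_lt_0_compat; lra).
  replace (2*sqrt (g/2)*(sqrt (g - 1) - 1)/(g + 1))
    with (2*sqrt (g/2)/(g + 1) * (sqrt (g - 1) - 1)) in Hgap by (field; lra).
  split; [nra|split].
  - intros Heq. assert (Hs : sqrt (g - 1) = 1) by nra.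
    assert (g - 1 = 1) by (rewrite <- (pow2_sqrt (g - 1)), Hs by lra; ring). lra.
  - intros ->. replace (2 - 1) with 1 in Hgap by ring. rewrite sqrt_1 in Hgap. lra.
Qed.

(** * One-sided positivity arguments *)

Lemma ball_abs (x e y : R) : ball x e y -> Rabs (y - x) < e.
Proof. easy. Qed.

Lemma abs_ball (x e y : R) : Rabs (y - x) < e -> ball x e y.
Proof. easy. Qed.

Lemma locally_abs (x : R) (P : R -> Prop) :
  locally x P -> exists e, 0 < e /\ forall y, Rabs (y - x) < e -> P y.
Proof.
  intros [e He]. exists e. split; [apply cond_pos|]. intros y Hy. apply He, abs_ball, Hy.
Qed.

Lemma at_right_abs (a : R) (P : R -> Prop) :
  at_right a P -> exists e, 0 < e /\ forall x, a < x < a + e -> P x.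
Proof.
  intros [e He]. exists e. split; [apply cond_pos|]. intros x Hx.
  apply He; [apply abs_ball; rewrite Rabs_right|]; lra.
Qed.

Lemma locally_pos (L : R) : 0 < L -> locally L (fun y => 0 < y).
Proof.
  intros HL. exists (mkposreal L HL). intros y Hy. apply ball_abs, Rabs_def2 in Hy.
  simpl in Hy. lra.
Qed.

Lemma lim_right_pos_near (h : R -> R) (a L : R) :
  filterlim h (at_right a) (locally L) -> 0 < L ->
  exists e, 0 < e /\ forall x, a < x < a + e -> 0 < h x.
Proof. intros Hh HL. exact (at_right_abs a _ (Hh _ (locally_pos L HL))). Qed.

Lemma continuity_pt_pos_near (f : R -> R) (x : R) :
  continuity_pt f x -> 0 < f x -> exists e, 0 < e /\ forall y, Rabs (y - x) < e -> 0 < f y.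
Proof.
  intros Hf Hx. apply continuity_pt_filterlim in Hf.
  exact (locally_abs x _ (Hf _ (locally_pos _ Hx))).
Qed.

Lemma neg_left_of_deriv_pos_at_zero (h : R -> R) (s d : R) :
  derivable_pt_lim h s d -> 0 < d -> h s = 0 ->
  exists e, 0 < e /\ forall t, s - e < t < s -> h t < 0.
Proof.
  intros Hd Hd0 Hs. destruct (Hd d Hd0) as [e He]. exists e. split; [apply cond_pos|].
  intros t Ht.
  assert (Hq : Rabs ((h (s + (t - s)) - h s)/(t - s) - d) < d)
    by (apply He; [lra|rewrite Rabs_left; lra]).
  replace (s + (t - s)) with t in Hq by ring. rewrite Hs, Rminus_0_r in Hq.
  apply Rabs_def2 in Hq. destruct Hq as [_ Hq].
  assert (Hpos : 0 < h t / (t - s)) by lra.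
  assert (Hinv : / (t - s) < 0) by (apply Rinv_lt_0_compat; lra).
  unfold Rdiv in Hpos. nra.
Qed.

Lemma neg_left_of_nonpos (h : R -> R) (s d : R) :
  derivable_pt_lim h s d -> h s <= 0 -> (h s = 0 -> 0 < d) ->
  exists e, 0 < e /\ forall t, s - e < t < s -> h t < 0.
Proof.
  intros Hd Hs Hzero. destruct (Rle_lt_or_eq_dec _ _ Hs) as [Hneg|Heq].
  - assert (Hc : continuity_pt (fun t => - h t) s)
      by (apply continuity_pt_opp, derivable_continuous_pt; exists d; exact Hd).
    destruct (continuity_pt_pos_near _ s Hc ltac:(lra)) as [e [He Hnear]].
    exists e. split; [exact He|]. intros t Ht.
    assert (0 < - h t) by (apply Hnear; rewrite Rabs_left; lra). lra.
  - exact (neg_left_of_deriv_pos_at_zero h s d Hd (Hzero Heq) Heq).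
Qed.

Lemma pos_of_pos_before (h : R -> R) (a s d : R) :
  a < s -> derivable_pt_lim h s d -> (h s = 0 -> 0 < d) ->
  (forall r, a < r < s -> 0 < h r) -> 0 < h s.
Proof.
  intros Has Hd Hzero Hbefore. apply Rnot_le_lt. intros Hs.
  destruct (neg_left_of_nonpos h s d Hd Hs Hzero) as [e [He Hneg]].
  set (r := Rmax (s - e/2) ((a + s)/2)).
  assert (Hr1 : s - e/2 <= r) by apply Rmax_l.
  assert (Hr2 : (a + s)/2 <= r) by apply Rmax_r.
  assert (Hr3 : r < s) by (apply Rmax_lub_lt; lra).
  pose proof (Hneg r ltac:(lra)). pose proof (Hbefore r ltac:(lra)). lra.
Qed.

Lemma pos_of_upcrossing_zeros (h h' : R -> R) (a b : R) :
  (forall x, a < x < b -> derivable_pt_lim h x (h' x)) ->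
  (forall x, a < x < b -> h x = 0 -> 0 < h' x) ->
  (exists e, 0 < e /\ forall x, a < x < a + e -> 0 < h x) ->
  forall x, a < x < b -> 0 < h x.
Proof.
  intros Hd Hup [e [He Hstart]] x0 Hx0.
  destruct (Rlt_or_le x0 (a + e)) as [Hnear|Hfar]; [apply Hstart; lra|].
  set (E := fun t => t <= x0 /\ forall r, a < r <= t -> 0 < h r).
  assert (HEb : bound E) by (exists x0; intros t [Ht _]; exact Ht).
  assert (HEa : E (a + e/2)) by (split; [lra|intros r Hr; apply Hstart; lra]).
  destruct (completeness E HEb (ex_intro _ _ HEa)) as [s [Hub Hlub]].
  assert (Hs1 : a + e/2 <= s) by (apply Hub, HEa).
  assert (Hs2 : s <= x0) by (apply Hlub; intros t [Ht _]; exact Ht).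
  assert (Hbefore : forall r, a < r < s -> 0 < h r).
  { intros r Hr. apply Rnot_le_lt. intros Hhr.
    assert (s <= r); [|lra].
    apply Hlub. intros t [_ Ht]. apply Rnot_lt_le. intros Hrt.
    pose proof (Ht r ltac:(lra)). lra. }
  assert (Hhs : 0 < h s)
    by (apply (pos_of_pos_before h a s (h' s)); auto; [lra|apply Hd|apply Hup]; lra).
  destruct (Req_dec s x0) as [<-|Hsx]; [exact Hhs|exfalso].
  assert (Hcont : continuity_pt h s)
    by (apply derivable_continuous_pt; exists (h' s); apply Hd; lra).
  destruct (continuity_pt_pos_near h s Hcont Hhs) as [e' [He' Hnear]].
  set (t := Rmin (s + e'/2) x0).
  assert (Ht1 : t <= s + e'/2) by apply Rmin_l.
  assert (Ht2 : t <= x0) by apply Rmin_r.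
  assert (Ht3 : s < t) by (apply Rmin_glb_lt; lra).
  assert (E t).
  { split; [exact Ht2|]. intros r Hr. destruct (Rlt_or_le r s); [apply Hbefore; lra|].
    apply Hnear. rewrite Rabs_right; lra. }
  pose proof (Hub t H). lra.
Qed.

Lemma pos_of_deriv_pos_from_zero (h h' : R -> R) (a b : R) :
  (forall x, a < x < b -> derivable_pt_lim h x (h' x)) ->
  (forall x, a < x < b -> 0 < h' x) ->
  filterlim h (at_right a) (locally 0) ->
  forall x, a < x < b -> 0 < h x.
Proof.
  intros Hd Hpos Hlim x Hx.
  assert (Hincr : forall y w, a < y < w -> w <= x -> h y < h w).
  { intros y w Hy Hw. destruct (MVT_cor2 h h' y w ltac:(lra)) as [c [Hc Hcy]].
    - intros c Hc. apply Hd. lra.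
    - pose proof (Hpos c ltac:(lra)). nra. }
  apply Rnot_le_lt. intros Hhx.
  set (m := (a + x)/2).
  assert (Hm : h m < h x) by (apply Hincr; unfold m; lra).
  destruct (at_right_abs a _ (Hlim _ (locally_ball 0 (mkposreal (h x - h m) ltac:(lra)))))
    as [e [He Hball]].
  set (y := a + Rmin e (m - a)/2).
  assert (Hy1 : Rmin e (m - a) <= e) by apply Rmin_l.
  assert (Hy2 : Rmin e (m - a) <= m - a) by apply Rmin_r.
  assert (Hy3 : 0 < Rmin e (m - a)) by (apply Rmin_glb_lt; unfold m; lra).
  pose proof (ball_abs _ _ _ (Hball y ltac:(unfold y; lra))) as Hy. simpl in Hy.
  apply Rabs_def2 in Hy.
  assert (h y < h m) by (apply Hincr; unfold y, m in *; lra).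
  lra.
Qed.

Section RightLimits.

Variable a : R.

Lemma lim_right_const (L : R) : filterlim (fun _ => L) (at_right a) (locally L).
Proof. apply filterlim_const. Qed.

Lemma lim_right_id : filterlim (fun x => x) (at_right a) (locally a).
Proof. intros P [e He]. exists e. intros y Hy _. exact (He y Hy). Qed.

Lemma lim_right_plus (f g : R -> R) (A B : R) :
  filterlim f (at_right a) (locally A) -> filterlim g (at_right a) (locally B) ->
  filterlim (fun x => f x + g x) (at_right a) (locally (A + B)).
Proof.
  intros Hf Hg. eapply filterlim_comp_2; [exact Hf|exact Hg|].
  exact (filterlim_Rbar_plus A B (A + B) eq_refl).
Qed.

Lemma lim_right_mult (f g : R -> R) (A B : R) :
  filterlim f (at_right a) (locally A) -> filterlim g (at_right a) (locally B) ->
  filterlim (fun x => f x * g x) (at_right a) (locally (A * B)).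
Proof.
  intros Hf Hg. eapply filterlim_comp_2; [exact Hf|exact Hg|].
  exact (filterlim_Rbar_mult A B (A * B) eq_refl).
Qed.

Lemma lim_right_opp (f : R -> R) (A : R) :
  filterlim f (at_right a) (locally A) -> filterlim (fun x => - f x) (at_right a) (locally (- A)).
Proof. intros Hf. eapply filterlim_comp; [exact Hf|exact (filterlim_Rbar_opp A)]. Qed.

Lemma lim_right_inv (f : R -> R) (A : R) :
  filterlim f (at_right a) (locally A) -> A <> 0 ->
  filterlim (fun x => / f x) (at_right a) (locally (/ A)).
Proof.
  intros Hf HA. eapply filterlim_comp; [exact Hf|].
  apply (filterlim_Rbar_inv A). intros H. apply HA. injection H. easy.
Qed.

Lemma lim_right_pow (f : R -> R) (A : R) (n : nat) :
  filterlim f (at_right a) (locally A) ->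
  filterlim (fun x => f x ^ n) (at_right a) (locally (A ^ n)).
Proof.
  intros Hf. induction n as [|n IH]; [apply lim_right_const|].
  apply (lim_right_mult _ _ _ _ Hf IH).
Qed.

End RightLimits.

Ltac lim_right_tac Hc :=
  repeat first [ exact Hc | apply lim_right_const | apply lim_right_id
               | apply lim_right_plus | apply lim_right_mult | apply lim_right_opp
               | apply lim_right_pow | apply lim_right_inv ].

Lemma lim_right_slope m g z k a c0 (C : R -> R) :
  filterlim C (at_right a) (locally c0) -> 1 + a <> 0 -> Gf m g z a c0 <> 0 ->
  filterlim (fun V => Ff m g z V (C V) / Gf m g z V (C V) + k) (at_right a)
    (locally (Ff m g z a c0 / Gf m g z a c0 + k)).
Proof.
  intros Hc Ha HG.
  apply lim_right_plus; [apply lim_right_mult|apply lim_right_const].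
  - unfold Ff, Rdiv, Rminus. lim_right_tac Hc. exact Ha.
  - apply lim_right_inv; [|exact HG]. unfold Gf, lam, Rminus. lim_right_tac Hc.
Qed.

Section Solution.

Variables (m g z : R) (C : R -> R).
Hypothesis Hm : 1 <= m.
Hypothesis Hg : 2 <= g <= 3.
Hypothesis Hz : 0 < z <= zM g.
Hypothesis Hsol : is_solution m g z (V1g g) (Vend g z) (C1g g) C.

Let k := sqrt (g/2).
Let gap (V : R) : R := C V + k*V.
Let gap' (V : R) : R := Ff m g z V (C V) / Gf m g z V (C V) + k.

Lemma line_factor_signs V : V1g g <= V < Vend g z ->
  V < 0 /\ 0 < 1 + V /\ 0 < Bline m g z V /\ Pline g z V < 0.
Proof.
  intros HV. pose proof (Vend_neg g z Hg Hz). pose proof (V1g_gt_neg1 g ltac:(lra)).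
  repeat split; try lra.
  - apply (Bline_pos_before m g z V (Vend g z)); try nra.
    exact (Bline_Vend_nonneg g z Hg Hz m ltac:(lra)).
  - apply (Pline_neg_between g z (V1g g) (Vend g z)); try lra.
    + exact (Pline_V1_neg g z Hg Hz).
    + exact (Pline_Vend_nonpos g z Hg Hz).
Qed.

Lemma slope_on_line_pos_segment V : V1g g <= V < Vend g z ->
  0 < Ff m g z V (-(k*V)) / Gf m g z V (-(k*V)) + k.
Proof.
  intros HV. destruct (line_factor_signs V HV) as [HV0 [HV1 [HB HP]]].
  pose proof (sqrt_half_bounds g Hg) as Hk. fold k in Hk.
  apply slope_on_line_pos; auto; [exact (sqrt_half_sq g Hg)|lra|lra].
Qed.

Lemma gap_derivative x : V1g g < x < Vend g z -> derivable_pt_lim gap x (gap' x).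
Proof.
  intros Hx. destruct Hsol as [_ [_ Hode]]. destruct (Hode x Hx) as [_ HC].
  replace (gap' x) with (Ff m g z x (C x) / Gf m g z x (C x) + k*1) by (unfold gap'; ring).
  apply (derivable_pt_lim_plus C (fun V => k*V)); [exact HC|].
  apply (derivable_pt_lim_scal id k x 1), derivable_pt_lim_id.
Qed.

Lemma gap_lim_start : filterlim gap (at_right (V1g g)) (locally (C1g g + k*V1g g)).
Proof.
  destruct Hsol as [_ [Hlim _]]. apply lim_right_plus; [exact Hlim|].
  apply lim_right_mult; [apply lim_right_const|apply lim_right_id].
Qed.

Lemma gap_pos_near_start_on_line : V1g g < Vend g z -> C1g g = -(k*V1g g) ->
  exists e, 0 < e /\ forall x, V1g g < x < V1g g + e -> 0 < gap x.
Proof.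
  intros Hlt Hon. destruct Hsol as [_ [Hlim _]].
  destruct (line_factor_signs (V1g g) ltac:(lra)) as [HV0 [HV1 [HB _]]].
  assert (HG : Gf m g z (V1g g) (C1g g) <> 0)
    by (rewrite Hon, (Gf_on_line m g z k) by exact (sqrt_half_sq g Hg); nra).
  pose proof (lim_right_slope m g z k (V1g g) (C1g g) C Hlim ltac:(lra) HG) as Hslope_lim.
  assert (Hslope : 0 < Ff m g z (V1g g) (C1g g) / Gf m g z (V1g g) (C1g g) + k)
    by (rewrite Hon; apply slope_on_line_pos_segment; lra).
  destruct (lim_right_pos_near gap' _ _ Hslope_lim Hslope) as [e [He Hpos]].
  exists (Rmin e (Vend g z - V1g g)).
  assert (He1 : Rmin e (Vend g z - V1g g) <= e) by apply Rmin_l.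
  assert (He2 : Rmin e (Vend g z - V1g g) <= Vend g z - V1g g) by apply Rmin_r.
  split; [apply Rmin_glb_lt; lra|].
  apply (pos_of_deriv_pos_from_zero gap gap').
  - intros x Hx. apply gap_derivative. lra.
  - intros x Hx. apply Hpos. lra.
  - replace 0 with (C1g g + k*V1g g) by lra. exact gap_lim_start.
Qed.

Lemma gap_pos_near_start : V1g g < Vend g z ->
  exists e, 0 < e /\ forall x, V1g g < x < V1g g + e -> 0 < gap x.
Proof.
  intros Hlt. destruct (C1g_above_line g ltac:(lra)) as [Hge Hiff]. fold k in Hge, Hiff.
  destruct (Req_dec g 2) as [Hg2|Hg2].
  - exact (gap_pos_near_start_on_line Hlt (proj2 Hiff Hg2)).
  - apply (lim_right_pos_near gap _ _ gap_lim_start).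
    assert (C1g g <> -(k*V1g g)) by (intros H; apply Hg2, Hiff, H). lra.
Qed.

Lemma solution_above_line V : V1g g < V < Vend g z -> C V > - (k*V).
Proof.
  intros HV.
  assert (Hpos : 0 < gap V).
  { apply (pos_of_upcrossing_zeros gap gap' (V1g g) (Vend g z)); auto.
    - exact gap_derivative.
    - intros x Hx Hzero. unfold gap'.
      replace (C x) with (-(k*x)) by (unfold gap in Hzero; lra).
      apply slope_on_line_pos_segment. lra.
    - apply gap_pos_near_start. lra. }
  unfold gap in Hpos. lra.
Qed.

End Solution.

Theorem mainTheorem10 (m : nat) (g z : R) (C : R -> R) :
  (m = 1%nat \/ m = 2%nat) ->
  2 <= g <= 3 ->
  0 < z <= zM g ->
  is_solution (INR m) g z (V1g g) (Vend g z) (C1g g) C ->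
  (forall V, V1g g < V < Vend g z -> C V > - (sqrt (g / 2) * V)) /\
  C1g g >= - (sqrt (g / 2) * V1g g) /\
  (C1g g = - (sqrt (g / 2) * V1g g) <-> g = 2).
Proof.
  intros Hm Hg Hz Hsol.
  assert (HmR : 1 <= INR m) by (destruct Hm as [-> | ->]; simpl; lra).
  split.
  - exact (solution_above_line (INR m) g z C HmR Hg Hz Hsol).
  - apply C1g_above_line. lra.
Qed.
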